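(* Let $\pi$ be a measure on $\mathcal Y$ (extended by zero to $\mathbb Z$). The following are equivalent: (1) $\pi$ is a stationary measure (resp. stationary distribution) of $Y_t$ on $\mathcal Y$. (2) $\pi$ is a non-negative measure (resp. probability distribution) on $\mathcal Y$ such that for every $x\in\mathbb N_0$, $$\sum_{\omega\in\Omega_-}\ \sum_{j=\omega\omega_*^{-1}+1}^{0}\lambda_\omega(x-j\omega_* )\pi(x-j\omega_* )=\sum_{\omega\in\Omega_+}\ \sum_{j=1}^{\omega\omega_*^{-1}}\lambda_\omega(x-j\omega_* )\pi(x-j\omega_* )<\infty .$$ (3) $\pi$ is a non-negative measure (resp. probability distribution) on $\mathcal Y$ such that for every $x\in\mathbb N_0$, $$\sum_{j=\omega_-+1}^{0}\pi(x-j\omega_* )\sum_{\omega\in A_j}\lambda_\omega(x-j\omega_* )=\sum_{j=1}^{\omega_+}\pi(x-j\omega_* )\sum_{\omega\in A_j}\lambda_\omega(x-j\omega_* )<\infty .$$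
   Context: Let $(Y_t)_{t\ge0}$ be a minimal continuous-time Markov chain on a state space $\mathcal Y\subseteq\mathbb N_0$ with transition rate matrix $Q=(q_{x,y})_{x,y\in\mathcal Y}$ with finite entries. Let $\Omega=\{y-x: q_{x,y}>0\text{ for some }x,y\in\mathcal Y\}$ and $\lambda_\omega(x)=q_{x,x+\omega}$ for $x\in\mathcal Y$, $\omega\in\Omega$. Convention: functions defined on $\mathcal Y$ (such as $\lambda_\omega$ and measures $\pi$) are set to $0$ at points of $\mathbb Z\setminus\mathcal Y$. Let $\Omega_+=\{\omega\in\Omega:\omega>0\}$, $\Omega_-=\{\omega\in\Omega:\omega<0\}$, $\omega_*=\gcd(\Omega)>0$, $\omega_+=\max_{\omega\in\Omega_+}\omega/\omega_*$, $\omega_-=\min_{\omega\in\Omega_-}\omega/\omega_*$ (with $\max\varnothing=-\infty$, $\min\varnothing=+\infty$, and max/min equal to $\pm\infty$ if unbounded). For integers $j$ with $\omega_-\le j\le\omega_++1$ let $A_j=\{\omega\in\Omega_-: j\omega_*>\omega\}$ if $j\le0$ and $A_j=\{\omega\in\Omega_+: j\omega_*\le\omega\}$ if $j\ge1$. A stationary measure of $Y_t$ is a non-negative measure $\pi$ on $\mathcal Y$ satisfying the master equation $0=\sum_{\omega\in\Omega}\lambda_\omega(x-\omega)\pi(x-\omega)-\sum_{\omega\in\Omega}\lambda_\omega(x)\pi(x)$ for all $x\in\mathcal Y$; a stationary distribution is a stationary measure that is a probability measure. *)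

From HB Require Import structures.
From mathcomp Require Import all_boot all_order all_algebra.
From mathcomp Require Import all_classical all_reals all_analysis.
Set Implicit Arguments. Unset Strict Implicit. Unset Printing Implicit Defensive.
Import Order.TTheory GRing.Theory Num.Theory.
Local Open Scope classical_set_scope.
Local Open Scope ring_scope.

Section Defs.
Variable R : realType.
(* State space Y ⊆ N0 ⊆ Z, rates q x y = q_{x,y} (only values on Y x Y matter). *)
Variables (Y : set int) (q : int -> int -> R).

Definition rate_matrix : Prop :=
  (forall x y, x \in Y -> y \in Y -> x != y -> 0 <= q x y) /\
  (forall x, x \in Y -> ((- q x x)%:E = \esum_(y in Y `\ x) (q x y)%:E)%E).

Definition Omega : set int :=
  [set w | exists x y, [/\ x \in Y, y \in Y, 0 < q x y & w = y - x]].
Definition Omega_plus : set int := [set w | Omega w /\ 0 < w].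
Definition Omega_minus : set int := [set w | Omega w /\ w < 0].

Definition is_gcd_set (S : set int) (d : int) : Prop :=
  0 <= d /\ (forall w, S w -> (d %| w)%Z) /\
  (forall e, (forall w, S w -> (e %| w)%Z) -> (e %| d)%Z).

Definition lambda (w x : int) : R :=
  if (x \in Y) && (x + w \in Y) then q x (x + w) else 0.

Variable ws : int.

(* omega_+ = max_{w in Omega_+} w/omega_* (sup in \bar R: -oo if empty, +oo if unbounded) *)
Definition omega_plus : \bar R :=
  ereal_sup [set ((w %/ ws)%Z)%:~R%:E | w in Omega_plus].
(* omega_- = min_{w in Omega_-} w/omega_* (+oo if empty, -oo if unbounded) *)
Definition omega_minus : \bar R :=
  ereal_inf [set ((w %/ ws)%Z)%:~R%:E | w in Omega_minus].

Definition A (j : int) : set int :=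
  if j <= 0 then [set w | Omega_minus w /\ w < j * ws]
  else [set w | Omega_plus w /\ j * ws <= w].

Definition measure_on_Y (pi : int -> R) : Prop :=
  (forall x, 0 <= pi x) /\ (forall x, ~ Y x -> pi x = 0).

Definition probability_on_Y (pi : int -> R) : Prop :=
  measure_on_Y pi /\ (\esum_(x in Y) (pi x)%:E = 1)%E.

Definition master_equation (pi : int -> R) : Prop :=
  forall x, x \in Y ->
    (0 = \esum_(w in Omega) (lambda w (x - w) * pi (x - w))%:E
         - \esum_(w in Omega) (lambda w x * pi x)%:E)%E.

Definition stationary_measure (pi : int -> R) : Prop :=
  measure_on_Y pi /\ master_equation pi.
Definition stationary_distribution (pi : int -> R) : Prop :=
  probability_on_Y pi /\ master_equation pi.

Definition flux2 (pi : int -> R) : Prop :=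
  forall x : int, 0 <= x ->
    let L := \esum_(w in Omega_minus)
               \esum_(j in [set j : int | (w %/ ws)%Z + 1 <= j <= 0])
                 (lambda w (x - j * ws) * pi (x - j * ws))%:E in
    let Rh := \esum_(w in Omega_plus)
               \esum_(j in [set j : int | 1 <= j <= (w %/ ws)%Z])
                 (lambda w (x - j * ws) * pi (x - j * ws))%:E in
    (L = Rh /\ Rh < +oo)%E.

Definition flux3 (pi : int -> R) : Prop :=
  forall x : int, 0 <= x ->
    let L := \esum_(j in [set j : int | (omega_minus + 1 <= j%:~R%:E)%E /\ j <= 0])
               ((pi (x - j * ws))%:E *
                \esum_(w in A j) (lambda w (x - j * ws))%:E)%E in
    let Rh := \esum_(j in [set j : int | 1 <= j /\ (j%:~R%:E <= omega_plus)%E])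
               ((pi (x - j * ws))%:E *
                \esum_(w in A j) (lambda w (x - j * ws))%:E)%E in
    (L = Rh /\ Rh < +oo)%E.
End Defs.

From HB Require Import structures.
From mathcomp Require Import all_boot all_order all_algebra.
From mathcomp Require Import all_classical all_reals all_analysis.
From mathcomp Require Import zify ring lra.
Import Order.TTheory GRing.Theory Num.Theory.
Local Open Scope classical_set_scope.
Local Open Scope ring_scope.

(* For a cut x, down_flux x (left side of (2)) collects the negative jumps from
   the lattice points x - j ws, j in (w/ws, 0], and up_flux x (right side of (2))
   the positive jumps from x - j ws, j in [1, w/ws].  Shifting the cut by one
   lattice step ws is a telescoping of windows (window_down_step,
   window_up_step): the down flux trades the outflow of negative jumps at x for
   their inflow, the up flux trades the inflow of positive jumps for their
   outflow.  Hence, given balance at the cut x, the master equation at x is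
   equivalent to balance at x + ws (master_balance_step, whose extended-real
   bookkeeping is balance_step).  Both fluxes vanish below the lowest lattice
   step, so induction gives (1) => (2), and (2) at x and x + ws gives (1).
   Condition (3) is condition (2) with the double sums exchanged, through the
   index swap (w, j) <-> (j, w) (esum_esum_swap, down/up_index_swap). *)

Section esum_facts.
Local Open Scope ereal_scope.
Variable R : realType.

Lemma ge0_esumZl (T : choiceType) (A : set T) (a : T -> \bar R) (c : R) :
  (0 <= c)%R -> (forall i, A i -> 0 <= a i) ->
  c%:E * (\esum_(i in A) a i) = \esum_(i in A) c%:E * a i.
Proof.
move=> c0 a0.
have esumTZ (b : T -> \bar R) : (forall i, 0 <= b i) ->
    c%:E * (\esum_(i in setT) b i) = \esum_(i in setT) c%:E * b i.
  move=> b0; rewrite /esum -ereal_supZl //; last first.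
    apply/set0P; exists 0; exists set0; first exact: fsets_set0.
    by rewrite fsbig_set0.
  congr ereal_sup; apply/seteqP; split => y /=.
    by case=> _ [F hF <-] <-; exists F => //; rewrite ge0_mule_fsumr.
  case=> F hF <-; exists (\sum_(i \in F) b i); first by exists F.
  by rewrite ge0_mule_fsumr.
rewrite esum_mkcond [RHS]esum_mkcond esumTZ; last first.
  by move=> i; case: ifP => // /[!inE] /a0.
by apply: eq_esum => i _; case: ifP => //; rewrite mule0.
Qed.

Lemma esumD1 (T : choiceType) (A : set T) (t : T) (a : T -> \bar R) :
  (forall i, A i -> 0 <= a i) -> A t ->
  \esum_(i in A) a i = \esum_(i in A `\ t) a i + a t.
Proof.
move=> a0 At; rewrite (esumID [set t]) // setDE addeC; congr (_ + _).
have -> : A `&` [set t] = [set t] by apply/seteqP; split => [i []|i ->].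
by rewrite esum_set1 //; apply: a0.
Qed.

Lemma esum_esum_swap (T1 T2 : choiceType) (I : set T1) (J : T1 -> set T2)
    (I' : set T2) (J' : T2 -> set T1) (a : T1 -> T2 -> \bar R) :
  (forall i j, I i /\ J i j <-> I' j /\ J' j i) ->
  (forall i j, I i -> J i j -> 0 <= a i j) ->
  \esum_(i in I) \esum_(j in J i) a i j = \esum_(j in I') \esum_(i in J' j) a i j.
Proof.
move=> IJ a0; rewrite !esum_esum //; last first.
  by move=> j i I'j J'ji; have [Ii Jij] := (IJ i j).2 (conj I'j J'ji); apply: a0.
rewrite [RHS](reindex_esum (I `*`` J) _ (fun k => (k.2, k.1))) //; split.
- by move=> [i j] /= /IJ.
- by move=> [i j] [i' j'] _ _ [-> ->].
- by move=> [j i] /= /IJ ij; exists (i, j).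
Qed.

Definition int_interval (a b : int) : set int := [set j | (a <= j <= b)%R].

Lemma esum_interval_top (g : int -> \bar R) (a b : int) :
  (forall j, 0 <= g j) -> (a <= b)%R ->
  \esum_(j in int_interval a b) g j =
  \esum_(j in int_interval a (b - 1)) g j + g b.
Proof.
move=> g0 ab; rewrite (@esumD1 _ _ b) //; last by rewrite /int_interval /= ab lexx.
congr (_ + _); congr esum; apply/seteqP; split => j /=.
  by case=> /andP[? ?] /eqP ?; apply/andP; split; lia.
by move=> /andP[? ?]; split; [apply/andP; split|]; lia.
Qed.

Lemma esum_interval_bottom (g : int -> \bar R) (a b : int) :
  (forall j, 0 <= g j) -> (a <= b)%R ->
  \esum_(j in int_interval a b) g j =
  \esum_(j in int_interval (a + 1) b) g j + g a.
Proof.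
move=> g0 ab; rewrite (@esumD1 _ _ a) //; last by rewrite /int_interval /= ab lexx.
congr (_ + _); congr esum; apply/seteqP; split => j /=.
  by case=> /andP[? ?] /eqP ?; apply/andP; split; lia.
by move=> /andP[? ?]; split; [apply/andP; split|]; lia.
Qed.

Lemma esum_interval_shift (g : int -> \bar R) (a b : int) :
  \esum_(j in int_interval (a + 1) (b + 1)) g j =
  \esum_(j in int_interval a b) g (j + 1)%R.
Proof.
apply: reindex_esum; split.
- by move=> j /= /andP[? ?]; apply/andP; split; lia.
- by move=> i j _ _ /=; lia.
- move=> j /= /andP[? ?]; exists (j - 1)%R; last by ring.
  by apply/andP; split; lia.
Qed.

End esum_facts.

Section window_sums.
Local Open Scope ereal_scope.
Variables (R : realType) (h : int -> \bar R).
Hypothesis h_ge0 : forall z, 0 <= h z.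

Let shift (x s j : int) : (x + s - (j + 1) * s = x - j * s)%R.
Proof. by ring. Qed.

Lemma window_down_step (k x s : int) : (k < 0)%R ->
  let C := \esum_(j in int_interval (k + 1) (-1)) h (x - j * s)%R in
  \esum_(j in int_interval (k + 1) 0) h (x - j * s)%R = C + h x /\
  \esum_(j in int_interval (k + 1) 0) h (x + s - j * s)%R = C + h (x - k * s)%R.
Proof.
move=> k0 /=; split.
  by rewrite esum_interval_top ?sub0r ?mul0r ?subr0 //; lia.
have -> : int_interval (k + 1) 0 = int_interval (k + 1) (-1 + 1) by rewrite addNr.
have k_le : (k <= -1)%R by lia.
rewrite esum_interval_shift esum_interval_bottom //.
by under eq_esum do rewrite shift; rewrite shift.
Qed.

Lemma window_up_step (k x s : int) : (0 < k)%R ->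
  let C := \esum_(j in int_interval 1 (k - 1)) h (x - j * s)%R in
  \esum_(j in int_interval 1 k) h (x - j * s)%R = C + h (x - k * s)%R /\
  \esum_(j in int_interval 1 k) h (x + s - j * s)%R = C + h x.
Proof.
move=> k0 /=; split; first by rewrite esum_interval_top //; lia.
have -> : int_interval 1 k = int_interval (0 + 1) (k - 1 + 1) by rewrite add0r subrK.
have k_ge : (0 <= k - 1)%R by lia.
rewrite esum_interval_shift esum_interval_bottom // add0r.
by under eq_esum do rewrite shift; rewrite mul1r addrK.
Qed.

End window_sums.
Arguments window_down_step {R h} h_ge0 {k} x s.
Arguments window_up_step {R h} h_ge0 {k} x s.

(* Bookkeeping in the extended reals behind one step of the induction: if the
   down flux C + Od balances the finite up flux C' + Ib, then the inflow Ia + Ib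
   balances the outflow Od + Ou (with 0 = In - Out, forcing both to be finite)
   iff the shifted fluxes C + Ia and C' + Ou balance and are finite. *)
Lemma balance_step (R : realType) (C C' Od Ou Ia Ib : \bar R) :
  (0 <= C -> 0 <= C' -> 0 <= Od -> 0 <= Ou -> 0 <= Ia -> 0 <= Ib ->
   C + Od = C' + Ib -> C' + Ib < +oo ->
   0 = (Ia + Ib) - (Od + Ou) <-> C + Ia = C' + Ou /\ C' + Ou < +oo)%E.
Proof.
move=> C0 C'0 Od0 Ou0 Ia0 Ib0 E fin.
split => [|[]]; move: C0 C'0 Od0 Ou0 Ia0 Ib0 E fin;
case: C => [c||]//; case: C' => [c'||]//; case: Od => [d||]//;
case: Ou => [u||]//; case: Ia => [a||]//; case: Ib => [b||]// => /=;
rewrite ?lee_fin ?ltry -!EFinD => ?????? [E] _ [M].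
- by split => //; congr EFin; lra.
- by move=> _; congr EFin; lra.
Qed.

Section flux_balance.
Local Open Scope ereal_scope.
Variables (R : realType) (Y : set int) (q : int -> int -> R) (ws : int)
  (pi : int -> R).
Hypotheses (Y_ge0 : Y `<=` [set x | (0 <= x)%R]) (Q_rate : rate_matrix Y q)
  (ws_gcd : is_gcd_set (Omega Y q) ws) (ws_gt0 : (0 < ws)%R)
  (pi_measure : measure_on_Y Y pi).

(* Diagonal entries of a rate matrix are nonpositive, since the row sums
   vanish and off-diagonal entries are nonnegative. *)
Lemma rate_diag_le0 x : x \in Y -> (q x x <= 0)%R.
Proof.
move=> xY; have := Q_rate.2 x xY.
have : 0 <= \esum_(y in Y `\ x) (q x y)%:E.
  apply: esum_ge0 => y [yY ynx]; rewrite lee_fin; apply: Q_rate.1 => //.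
    by rewrite inE.
  by apply/eqP => e; apply: ynx; rewrite e.
by move=> /[swap] <-; rewrite lee_fin oppr_ge0.
Qed.

Lemma Omega_neq0 {w} : Omega Y q w -> w != 0%R.
Proof.
move=> [x [y [xY yY qxy ->]]]; apply/eqP => e.
have exy : y = x by lia.
by move: qxy; rewrite exy ltNge rate_diag_le0.
Qed.

Lemma Omega_divzK {w} : Omega Y q w -> ((w %/ ws)%Z * ws = w)%R.
Proof. by move=> hw; rewrite divzK //; apply: ws_gcd.2.1. Qed.

Lemma lambda_ge0 w z : w != 0%R -> (0 <= lambda Y q w z)%R.
Proof.
move=> wn0; rewrite /lambda; case: ifP => // /andP[zY zwY].
by apply: Q_rate.1 => //; apply/eqP => e; move/eqP: wn0; apply; lia.
Qed.

Definition flow (w z : int) : \bar R := (lambda Y q w z * pi z)%:E.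

Lemma Omega_flow_ge0 {w} z : Omega Y q w -> 0 <= flow w z.
Proof. by move/Omega_neq0 => wn0; rewrite lee_fin mulr_ge0 ?lambda_ge0 ?pi_measure.1. Qed.

Definition inflow (S : set int) (x : int) : \bar R := \esum_(w in S) flow w (x - w)%R.
Definition outflow (S : set int) (x : int) : \bar R := \esum_(w in S) flow w x.

(* Flux of negative jumps across the cut below x (left side of (2)) and of
   positive jumps across it (right side of (2)). *)
Definition down_flux (x : int) : \bar R :=
  \esum_(w in Omega_minus Y q)
     \esum_(j in int_interval ((w %/ ws)%Z + 1) 0) flow w (x - j * ws)%R.
Definition up_flux (x : int) : \bar R :=
  \esum_(w in Omega_plus Y q)
     \esum_(j in int_interval 1 (w %/ ws)%Z) flow w (x - j * ws)%R.

Lemma flux2E : flux2 Y q ws pi <->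
  forall x, (0 <= x)%R -> down_flux x = up_flux x /\ up_flux x < +oo.
Proof. by []. Qed.

Lemma esum_Omega_split (f : int -> \bar R) : (forall w, Omega Y q w -> 0 <= f w) ->
  \esum_(w in Omega Y q) f w =
  \esum_(w in Omega_minus Y q) f w + \esum_(w in Omega_plus Y q) f w.
Proof.
move=> f0; rewrite (esumID [set w | (w < 0)%R]) //; congr (_ + _); congr esum.
apply/seteqP; split => w /=.
  by case=> hw hn; split => //; have := Omega_neq0 hw; rewrite /setC /= in hn; lia.
by case=> hw hp; split => //; rewrite /setC /=; lia.
Qed.

Lemma Omega_minus_steps {w} : Omega_minus Y q w -> ((w %/ ws)%Z < 0)%R.
Proof. by case=> hw wn; have := Omega_divzK hw; nia. Qed.

Lemma Omega_plus_steps {w} : Omega_plus Y q w -> (0 < (w %/ ws)%Z)%R.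
Proof. by case=> hw wp; have := Omega_divzK hw; nia. Qed.

Lemma down_flux_step x : exists2 C, 0 <= C &
  down_flux x = C + outflow (Omega_minus Y q) x /\
  down_flux (x + ws) = C + inflow (Omega_minus Y q) x.
Proof.
exists (\esum_(w in Omega_minus Y q)
   \esum_(j in int_interval ((w %/ ws)%Z + 1) (-1)) flow w (x - j * ws)%R).
  by apply: esum_ge0 => w [hw _]; apply: esum_ge0 => j _; apply: Omega_flow_ge0.
have ge0 w : Omega_minus Y q w -> forall z, 0 <= flow w z.
  by case=> hw _ z; apply: Omega_flow_ge0.
rewrite /down_flux /outflow /inflow -!esumD;
  do ?by move=> w /ge0 h; rewrite ?esum_ge0.
have step w (hw : Omega_minus Y q w) :=
  window_down_step (ge0 w hw) x ws (Omega_minus_steps hw).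
split; apply: eq_esum => w hw; first by rewrite (step w hw).1.
by rewrite (step w hw).2 (Omega_divzK hw.1).
Qed.

Lemma up_flux_step x : exists2 C, 0 <= C &
  up_flux x = C + inflow (Omega_plus Y q) x /\
  up_flux (x + ws) = C + outflow (Omega_plus Y q) x.
Proof.
exists (\esum_(w in Omega_plus Y q)
   \esum_(j in int_interval 1 ((w %/ ws)%Z - 1)) flow w (x - j * ws)%R).
  by apply: esum_ge0 => w [hw _]; apply: esum_ge0 => j _; apply: Omega_flow_ge0.
have ge0 w : Omega_plus Y q w -> forall z, 0 <= flow w z.
  by case=> hw _ z; apply: Omega_flow_ge0.
rewrite /up_flux /outflow /inflow -!esumD;
  do ?by move=> w /ge0 h; rewrite ?esum_ge0.
have step w (hw : Omega_plus Y q w) :=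
  window_up_step (ge0 w hw) x ws (Omega_plus_steps hw).
split; apply: eq_esum => w hw; last by rewrite (step w hw).2.
by rewrite (step w hw).1 (Omega_divzK hw.1).
Qed.

(* Below the first lattice step both fluxes vanish: every jump counted would
   start or end at a negative state, and Y lies in N_0. *)
Lemma fluxes_vanish_below x : (x < ws)%R -> down_flux x = 0 /\ up_flux x = 0.
Proof.
move=> x_lt; split; apply: esum1 => w hw; apply: esum1 => j /andP[j_lo j_hi].
  rewrite /flow /lambda; case: ifP => [/andP[_ /[!inE] /Y_ge0 /= zw_ge0]|_];
    last by rewrite mul0r.
  by have := Omega_divzK hw.1; nia.
rewrite /flow pi_measure.2 ?mulr0 // => /Y_ge0 /=; nia.
Qed.

(* The master equation holds trivially off Y, where all flows vanish. *)
Lemma master_everywhere : master_equation Y q pi ->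
  forall x, 0 = inflow (Omega Y q) x - outflow (Omega Y q) x.
Proof.
move=> master x; have [xY|xY] := boolP (x \in Y); first exact: master.
rewrite /inflow /outflow !esum1 ?sube0 // => w _; rewrite /flow.
  by rewrite pi_measure.2 ?mulr0 // => Yx; move/negP: xY; rewrite inE.
by rewrite /lambda subrK (negbTE xY) andbF mul0r.
Qed.

Lemma master_balance_step x :
  down_flux x = up_flux x -> up_flux x < +oo ->
  (0 = inflow (Omega Y q) x - outflow (Omega Y q) x <->
   down_flux (x + ws) = up_flux (x + ws) /\ up_flux (x + ws) < +oo).
Proof.
have [C C_ge0 [down_x down_next]] := down_flux_step x.
have [C' C'_ge0 [up_x up_next]] := up_flux_step x.
have ge0 S : S `<=` Omega Y q -> 0 <= inflow S x /\ 0 <= outflow S x.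
  by move=> SO; split; apply: esum_ge0 => w /SO; apply: Omega_flow_ge0.
have [Im_ge0 Om_ge0] := ge0 _ (fun w (hw : Omega_minus Y q w) => hw.1).
have [Ip_ge0 Op_ge0] := ge0 _ (fun w (hw : Omega_plus Y q w) => hw.1).
rewrite down_x up_x down_next up_next /inflow /outflow !esum_Omega_split;
  try by move=> w /Omega_flow_ge0.
exact: balance_step.
Qed.

(* (1) => (2): induction on the cut, starting below the lowest state. *)
Lemma master_to_balance : master_equation Y q pi ->
  forall x, down_flux x = up_flux x /\ up_flux x < +oo.
Proof.
move=> /master_everywhere master.
suff balance_below n : forall x, (x < n%:Z * ws)%R ->
    down_flux x = up_flux x /\ up_flux x < +oo.
  by move=> x; apply: (balance_below (absz x).+1); nia.
elim: n => [|n IH] x x_lt.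
  by have [-> ->] := fluxes_vanish_below x ltac:(lia); rewrite ltry.
have [x_lo|x_hi] := ltP x ws.
  by have [-> ->] := fluxes_vanish_below x x_lo; rewrite ltry.
have [bal fin] := IH (x - ws)%R ltac:(lia).
by have /(master_balance_step _ bal fin) := master (x - ws)%R; rewrite subrK.
Qed.

Lemma balance_to_master :
  (forall x, (0 <= x)%R -> down_flux x = up_flux x /\ up_flux x < +oo) ->
  master_equation Y q pi.
Proof.
move=> balance x xY; have x_ge0 : (0 <= x)%R by apply: Y_ge0; rewrite -inE.
have [bal fin] := balance x x_ge0.
by apply/(master_balance_step _ bal fin)/balance; lia.
Qed.

Lemma master_iff_flux2 : master_equation Y q pi <-> flux2 Y q ws pi.
Proof.
rewrite flux2E; split => [/master_to_balance balance x _|]; first exact: balance.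
exact: balance_to_master.
Qed.

Definition flux3_left (x : int) : \bar R :=
  \esum_(j in [set j : int | omega_minus Y q ws + 1 <= j%:~R%:E /\ (j <= 0)%R])
     ((pi (x - j * ws))%:E * \esum_(w in A Y q ws j) (lambda Y q w (x - j * ws))%:E).
Definition flux3_right (x : int) : \bar R :=
  \esum_(j in [set j : int | (1 <= j)%R /\ j%:~R%:E <= omega_plus Y q ws])
     ((pi (x - j * ws))%:E * \esum_(w in A Y q ws j) (lambda Y q w (x - j * ws))%:E).

Lemma flux3E : flux3 Y q ws pi <->
  forall x, (0 <= x)%R -> flux3_left x = flux3_right x /\ flux3_right x < +oo.
Proof. by []. Qed.

Lemma A_Omega {j w} : A Y q ws j w -> Omega Y q w.
Proof. by rewrite /A; case: ifP => _ [[]]. Qed.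

Lemma pi_times_rates j z :
  (pi z)%:E * (\esum_(w in A Y q ws j) (lambda Y q w z)%:E) =
  \esum_(w in A Y q ws j) flow w z.
Proof.
rewrite ge0_esumZl ?pi_measure.1 //; last first.
  by move=> w /A_Omega /Omega_neq0 wn0; rewrite lee_fin lambda_ge0.
by apply: eq_esum => w _; rewrite -EFinM mulrC.
Qed.

(* A negative jump w crosses the cut from the lattice point x - j ws exactly
   when w < j ws <= 0, i.e. when w is in A_j. *)
Lemma down_index_swap w j :
  Omega_minus Y q w /\ int_interval ((w %/ ws)%Z + 1) 0 j <->
  (omega_minus Y q ws + 1 <= j%:~R%:E /\ (j <= 0)%R) /\ A Y q ws j w.
Proof.
rewrite /A /int_interval /=; split.
  move=> [hw /andP[j_lo j_le0]]; rewrite j_le0; split; last first.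
    by split => //; have := Omega_divzK hw.1; case: hw => _; nia.
  split => //; apply: le_trans (_ : ((w %/ ws)%Z + 1)%:~R%:E <= _).
    by rewrite intrD EFinD leeD2r //; apply: ereal_inf_lbound; exists w.
  by rewrite lee_fin ler_int.
move=> [[_ j_le0]]; rewrite j_le0 => -[hw w_lt]; split => //.
by apply/andP; split => //; have := Omega_divzK hw.1; case: hw => _; nia.
Qed.

(* A positive jump w crosses the cut from x - j ws exactly when
   0 < j ws <= w, i.e. when w is in A_j. *)
Lemma up_index_swap w j :
  Omega_plus Y q w /\ int_interval 1 (w %/ ws)%Z j <->
  ((1 <= j)%R /\ j%:~R%:E <= omega_plus Y q ws) /\ A Y q ws j w.
Proof.
rewrite /A /int_interval /=; split.
  move=> [hw /andP[j_ge1 j_hi]]; have -> : (j <= 0)%R = false by lia.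
  split; last by split => //; have := Omega_divzK hw.1; case: hw => _; nia.
  split => //; apply: le_trans (_ : ((w %/ ws)%Z)%:~R%:E <= _).
    by rewrite lee_fin ler_int.
  by apply: ereal_sup_ubound; exists w.
move=> [[j_ge1 _]]; have -> : (j <= 0)%R = false by lia.
move=> [hw w_ge]; split => //.
by apply/andP; split => //; have := Omega_divzK hw.1; case: hw => _; nia.
Qed.

(* Conditions (2) and (3) have the same two sides, summed in the other order. *)
Lemma flux3_left_eq x : flux3_left x = down_flux x.
Proof.
rewrite /flux3_left; under eq_esum do rewrite pi_times_rates.
symmetry; apply: esum_esum_swap; first exact: down_index_swap.
by move=> w j [hw _] _; apply: Omega_flow_ge0.
Qed.

Lemma flux3_right_eq x : flux3_right x = up_flux x.
Proof.
rewrite /flux3_right; under eq_esum do rewrite pi_times_rates.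
symmetry; apply: esum_esum_swap; first exact: up_index_swap.
by move=> w j [hw _] _; apply: Omega_flow_ge0.
Qed.

Lemma flux2_iff_flux3 : flux2 Y q ws pi <-> flux3 Y q ws pi.
Proof.
rewrite flux2E flux3E.
by split=> balance x /balance; rewrite flux3_left_eq flux3_right_eq.
Qed.

End flux_balance.
Arguments master_iff_flux2 {R Y q ws pi}.
Arguments flux2_iff_flux3 {R Y q ws pi}.

Theorem theorem3p2 (R : realType) (Y : set int) (q : int -> int -> R) (ws : int)
  (pi : int -> R) :
  Y `<=` [set x | 0 <= x] ->
  rate_matrix Y q ->
  is_gcd_set (Omega Y q) ws -> 0 < ws ->
  measure_on_Y Y pi ->
  [/\ (stationary_measure Y q pi <-> measure_on_Y Y pi /\ flux2 Y q ws pi),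
      (stationary_measure Y q pi <-> measure_on_Y Y pi /\ flux3 Y q ws pi),
      (stationary_distribution Y q pi <-> probability_on_Y Y pi /\ flux2 Y q ws pi) &
      (stationary_distribution Y q pi <-> probability_on_Y Y pi /\ flux3 Y q ws pi)].
Proof.
move=> Y_ge0 Q_rate ws_gcd ws_gt0 pi_measure.
have master_flux2 := master_iff_flux2 Y_ge0 Q_rate ws_gcd ws_gt0 pi_measure.
have flux2_flux3 := flux2_iff_flux3 Q_rate ws_gcd ws_gt0 pi_measure.
rewrite /stationary_measure /stationary_distribution.
by split; tauto.
Qed.
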